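(* Let $p$ be a prime and let $\Phi_p$ be the set of all $\operatorname{fpt}(R,f)$, where $R$ ranges over $F$-pure rings of characteristic $p$ and $f$ over non-zero non-units of $R$. Then for every $\lambda\in\Phi_p$ and every integer $e\ge1$, we have $\langle\lambda\rangle_e\cdot\frac{p^e}{p^e-1}\le\lambda$.
   Context: A ring $R$ of characteristic $p$ is $F$-pure if $R\subseteq R^{1/p}$ splits as a map of $R$-modules. Roots and splitting. $R^{1/p^e}$ is the ring of formal $p^e$-th roots of elements of $R$, containing $R$ via $r\mapsto (r^{p^e})^{1/p^e}$. We write $f^{a/p^e}:=(f^a)^{1/p^e}$. The inclusion $R\cdot t\subseteq R^{1/p^e}$ splits if some $R$-linear $\theta:R^{1/p^e}\to R$ has $\theta(t)=1$. $F$-pure threshold. $(R,f^\lambda)$ is $F$-pure if $R\cdot f^{\lfloor (p^e-1)\lambda\rfloor/p^e}\subseteq R^{1/p^e}$ splits for all $e\ge1$. $\operatorname{fpt}(R,f)$ is the supremum of all $\lambda\ge0$ with $(R,f^\lambda)$ $F$-pure; it lies in $[0,1]$. Truncations. For $\alpha\in(0,1]$ with non-terminating base $p$ expansion $\alpha=\sum_{e\ge1}a_e/p^e$ (digits $0\le a_e\le p-1$, not all eventually zero), $\langle\alpha\rangle_e:=\sum_{i=1}^e a_i/p^i$. By convention $\langle0\rangle_e=0$. *)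

From HB Require Import structures.
From mathcomp Require Import all_boot all_order all_algebra.
From mathcomp Require Import all_classical all_reals all_analysis.
Unset Printing Implicit Defensive.
Import Order.TTheory GRing.Theory Num.Theory numFieldNormedType.Exports.
Local Open Scope classical_set_scope.
Local Open Scope ring_scope.

(* R^{1/p^e} is identified with R as an additive group; the element
   x^{1/p^e} corresponds to x, and r in R acts by r . x^{1/p^e} = (r^{p^e} x)^{1/p^e}.
   An R-linear map theta : R^{1/p^e} -> R is thus an additive map with
   theta (r^{p^e} * x) = r * theta x. *)
Definition root_linear (R : comNzRingType) (p e : nat) (theta : R -> R) : Prop :=
  (forall x y : R, theta (x + y) = theta x + theta y) /\
  (forall r x : R, theta (r ^+ (p ^ e) * x) = r * theta x).

(* The inclusion R . t^{1/p^e} ⊆ R^{1/p^e} splits. *)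
Definition splits_at (R : comNzRingType) (p e : nat) (t : R) : Prop :=
  exists theta : R -> R, root_linear R p e theta /\ theta t = 1.

Definition Fpure (R : comNzRingType) (p : nat) : Prop := splits_at R p 1 1.

Definition Fpure_pair (RR : realType) (R : comNzRingType) (p : nat) (f : R) (l : RR) : Prop :=
  forall e : nat, (0 < e)%N ->
    splits_at R p e (f ^+ Num.truncn (((p ^ e)%:R - 1) * l)).

Definition fpt (RR : realType) (R : comNzRingType) (p : nat) (f : R) : RR :=
  sup [set l : RR | 0 <= l /\ Fpure_pair RR R p f l].

(* a (indexed from 1) is a non-terminating base-p expansion of alpha. *)
Definition nonterm_expansion (RR : realType) (p : nat) (alpha : RR) (a : nat -> nat) : Prop :=
  (forall i, (a i < p)%N) /\
  ((fun n : nat => \sum_(1 <= i < n.+1) (a i)%:R / (p%:R ^+ i) : RR) @ \oo --> alpha) /\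
  (forall N : nat, exists i : nat, (N <= i)%N /\ a i <> 0%N).

(* t = <alpha>_e, with the convention <0>_e = 0. *)
Definition is_trunc (RR : realType) (p : nat) (alpha : RR) (e : nat) (t : RR) : Prop :=
  (alpha = 0 /\ t = 0) \/
  (0 < alpha <= 1 /\ exists a : nat -> nat, nonterm_expansion RR p alpha a /\
      t = \sum_(1 <= i < e.+1) (a i)%:R / (p%:R ^+ i)).

From HB Require Import structures.
From mathcomp Require Import all_boot all_order all_algebra.
From mathcomp Require Import all_classical all_reals all_analysis.
From mathcomp Require Import ring lra.

(* Write t = A / p^e.  Since the expansion does not terminate, t < fpt, so
   (R, f^l) is F-pure for some l > t; at a large level N this splits
   f^(A p^(N-e)) at level N, and Frobenius descent brings it down to a
   splitting of f^A at level e.  Composing that splitting with itself k times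
   splits f^(A (1 + q + ... + q^(k-1))), q = p^e, at level k e, and descending
   once more shows that (R, f^(A / (q - 1))) is F-pure.  Hence
   t q / (q - 1) = A / (q - 1) <= fpt. *)

Set Implicit Arguments.
Unset Strict Implicit.
Unset Printing Implicit Defensive.

Import Order.TTheory GRing.Theory Num.Theory numFieldNormedType.Exports.
Local Open Scope ring_scope.

Section Splitting.
Variables (R : comNzRingType) (p : nat).

Lemma splits_at_divisor n (x y : R) :
  splits_at R p n (x * y) -> splits_at R p n x.
Proof.
case=> th [[thD thZ] th1]; exists (fun z => th (y * z)); split; last by rewrite mulrC.
split=> [a b | r a]; first by rewrite mulrDr thD.
by rewrite mulrCA thZ.
Qed.

Lemma splits_at_exp_le n (f : R) a b :
  (a <= b)%N -> splits_at R p n (f ^+ b) -> splits_at R p n (f ^+ a).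
Proof. by move=> ab; rewrite -(subnKC ab) exprD; apply: splits_at_divisor. Qed.

Lemma splits_at0 : splits_at R p 0 1.
Proof. by exists id; split=> //; split=> // r x; rewrite expn0 expr1. Qed.

Lemma splits_at_comp m n (x y : R) :
  splits_at R p m x -> splits_at R p n y ->
  splits_at R p (m + n) (y ^+ (p ^ m) * x).
Proof.
case=> th [[thD thZ] th1]; case=> ps [[psD psZ] ps1].
exists (ps \o th); split; last by rewrite /= thZ th1 mulr1.
split=> [a b | r a] /=; first by rewrite thD psD.
by rewrite expnD mulnC exprM thZ psZ.
Qed.

Lemma Fpure_splits_at1 n : Fpure R p -> splits_at R p n 1.
Proof.
move=> hF; elim: n => [|n IH]; first exact: splits_at0.
by have := splits_at_comp hF IH; rewrite expr1n mulr1 add1n.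
Qed.

Lemma splits_at_nonunit n (f : R) b :
  ~ (exists g, f * g = 1) -> (p ^ n <= b)%N -> ~ splits_at R p n (f ^+ b).
Proof.
move=> fNunit /splits_at_exp_le/[apply]; rewrite -[f ^+ _]mulr1.
case=> th [[_ thZ] th1]; apply: fNunit; exists (th 1).
by rewrite -thZ.
Qed.

Lemma splits_at_geom e (f : R) A k :
  splits_at R p e (f ^+ A) ->
  splits_at R p (k * e) (f ^+ (A * \sum_(i < k) (p ^ e) ^ i)).
Proof.
move=> hA; elim: k => [|k IH].
  by rewrite big_ord0 muln0 expr0 mul0n; exact: splits_at0.
suff -> : (A * \sum_(i < k.+1) (p ^ e) ^ i
           = (A * \sum_(i < k) (p ^ e) ^ i) * p ^ e + A)%N.
  by rewrite mulSnr (addnC (k * e)%N) exprD exprM; exact: splits_at_comp.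
rewrite big_ord_recl expn0; under eq_bigr do rewrite lift0 expnSr.
by rewrite -big_distrl /= mulnDr muln1 mulnA addnC.
Qed.

Hypotheses (hp : prime p) (hchar : p \in [pchar R]).

Lemma splits_at_frobenius_descent n d (y w : R) :
  splits_at R p (n + d) (y ^+ (p ^ d) * w) -> splits_at R p n y.
Proof.
case=> th [[thD thZ] th1]; exists (fun z => th (z ^+ (p ^ d) * w)); split=> //.
(* additivity is that of the iterated Frobenius in characteristic p *)
split=> [a b | r a].
  by rewrite exprDn_pchar ?pnatX ?pnatE ?hchar // mulrDl thD.
by rewrite exprMn -exprM -expnD -mulrA thZ.
Qed.

Lemma splits_at_exp_div m n (f : R) b : (n <= m)%N ->
  splits_at R p m (f ^+ b) -> splits_at R p n (f ^+ (b %/ p ^ (m - n))).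
Proof.
move=> nm; set d := (m - n)%N; rewrite -(subnKC nm) -/d.
rewrite {1}(divn_eq b (p ^ d)) exprD exprM; exact: splits_at_frobenius_descent.
Qed.

End Splitting.

Section GeometricSums.
Variable RR : realType.

Lemma natr_geom_sum (q k : nat) :
  (\sum_(i < k) q ^ i)%N%:R * (q%:R - 1) = q%:R ^+ k - 1 :> RR.
Proof. by rewrite subrX1 mulrC natr_sum; under eq_bigr do rewrite natrX. Qed.

Lemma truncn_geom_le (P D q A k : nat) : (1 < q)%N -> (P * D = q ^ k)%N ->
  (Num.truncn (((P%:R - 1) * (A%:R / (q%:R - 1)) : RR)) * D
     <= A * \sum_(i < k) q ^ i)%N.
Proof.
move=> q_gt1 PD; have q1_gt0 : 0 < q%:R - 1 :> RR by rewrite subr_gt0 ltr1n.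
have /andP [P_gt0 D_gt0] : (0 < P)%N && (0 < D)%N.
  by rewrite -muln_gt0 PD expn_gt0 (ltnW q_gt1).
set z : RR := A%:R / _; have z_ge0 : 0 <= z by rewrite divr_ge0 // ltW.
have c_le : (Num.truncn ((P%:R - 1) * z))%:R <= (P%:R - 1) * z.
  by rewrite truncn_le mulr_ge0 // subr_ge0 ler1n.
have AS : (A * \sum_(i < k) q ^ i)%N%:R = z * ((P * D)%N%:R - 1) :> RR.
  rewrite natrM PD natrX -natr_geom_sum /z; field; exact: lt0r_neq0.
(* with c the truncation: c D <= (P - 1) z D <= (P D - 1) z, using D >= 1 *)
rewrite -(ler_nat RR) natrM AS natrM.
have D_ge1 : 1 <= D%:R :> RR by rewrite ler1n.
have := ler_wpM2r (ler0n _ D) c_le; nra.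
Qed.

End GeometricSums.

Section Descent.
Variables (RR : realType) (R : comNzRingType) (p : nat) (f : R).
Hypotheses (hp : prime p) (hchar : p \in [pchar R]).

Let p_gt1 : (1 < p)%N. Proof. exact: prime_gt1. Qed.

Lemma Fpure_pair_of_splits_at e A : (0 < e)%N ->
  splits_at R p e (f ^+ A) -> Fpure_pair RR R p f (A%:R / ((p ^ e)%:R - 1)).
Proof.
move=> e_gt0 hA n n_gt0; have n_le : (n <= n * e)%N by rewrite leq_pmulr.
have := splits_at_exp_div hp hchar n_le (splits_at_geom n hA).
apply: splits_at_exp_le; rewrite leq_divRL ?expn_gt0 ?(ltnW p_gt1) //.
apply: truncn_geom_le; first by rewrite -(expn0 p) ltn_exp2l.
by rewrite -expnD subnKC // -expnM mulnC.
Qed.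

Lemma splits_at_of_Fpure_pair e A l : (0 < e)%N ->
  A%:R / (p ^ e)%:R < l -> Fpure_pair RR R p f l -> splits_at R p e (f ^+ A).
Proof.
move=> e_gt0; set s : RR := _ / _ => s_lt_l hl.
have s_ge0 : 0 <= s by rewrite divr_ge0.
have ls_gt0 : 0 < l - s by rewrite subr_gt0.
have l_ge0 : 0 <= l := ltW (le_lt_trans s_ge0 s_lt_l).
(* N is chosen with p^N (l - s) > l, i.e. (p^N - 1) l > p^N s *)
set N := maxn e (Num.truncn (l / (l - s))).+1.
have eN : (e <= N)%N by rewrite leq_maxl.
have pN : l / (l - s) < (p ^ N)%:R.
  apply: (lt_le_trans (truncnS_gt _)); rewrite ler_nat.
  exact: leq_trans (leq_maxr _ _) (ltnW (ltn_expl _ p_gt1)).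
have A_le : (A * p ^ (N - e) <= Num.truncn (((p ^ N)%:R - 1) * l))%N.
  have pe_neq0 : (p ^ e)%:R != 0 :> RR by rewrite pnatr_eq0 -lt0n expn_gt0 prime_gt0.
  have As : (A * p ^ (N - e))%N%:R = s * (p ^ N)%:R.
    by rewrite natrM /s -[in RHS](subnK eN) expnD natrM; field.
  rewrite truncn_ge_nat; last by rewrite mulr_ge0 // subr_ge0 ler1n expn_gt0 prime_gt0.
  rewrite As; rewrite ltr_pdivrMr // in pN; nra.
have hN := splits_at_exp_le A_le (hl N (leq_trans e_gt0 eN)).
have := splits_at_exp_div hp hchar eN hN.
by rewrite mulnK // expn_gt0 prime_gt0.
Qed.

End Descent.

Section FPureThreshold.
Variables (RR : realType) (R : comNzRingType) (p : nat) (f : R).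
Hypotheses (p_gt1 : (1 < p)%N) (hF : Fpure R p) (f_nunit : ~ (exists g, f * g = 1)).

Lemma Fpure_pair0 : Fpure_pair RR R p f 0.
Proof. by move=> n _; rewrite mulr0 truncn0 expr0; exact: Fpure_splits_at1. Qed.

Lemma Fpure_pair_le2 l : 0 <= l -> Fpure_pair RR R p f l -> l <= 2.
Proof.
move=> l_ge0 /(_ 1%N isT); rewrite expn1.
have [p_le hs|] := leqP p (Num.truncn ((p%:R - 1) * l)).
  by case: (splits_at_nonunit f_nunit _ hs); rewrite expn1.
rewrite truncn_lt_nat ?mulr_ge0 ?subr_ge0 ?ler1n ?(ltnW p_gt1) // => lt_p _.
have p_ge2 : 2 <= p%:R :> RR by rewrite ler_nat.
have p1_gt0 : 0 < p%:R - 1 :> RR by rewrite subr_gt0 ltr1n.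
by rewrite -(ler_pM2l p1_gt0) ltW // (lt_le_trans lt_p) //; lra.
Qed.

Let Fpure_pairs := [set l : RR | 0 <= l /\ Fpure_pair RR R p f l]%classic.

Let has_sup_Fpure_pairs : has_sup Fpure_pairs.
Proof.
split; first by exists 0; split=> //; exact: Fpure_pair0.
by exists 2 => l [l_ge0 hl]; exact: Fpure_pair_le2.
Qed.

Lemma fpt_ge l : 0 <= l -> Fpure_pair RR R p f l -> l <= fpt RR R p f.
Proof. by move=> l_ge0 hl; apply: (sup_upper_bound has_sup_Fpure_pairs). Qed.

Lemma fpt_gt_Fpure_pair t : t < fpt RR R p f ->
  exists2 l, t < l & Fpure_pair RR R p f l.
Proof.
rewrite -subr_gt0 => /sup_adherent/(_ has_sup_Fpure_pairs)[l [_ hl] lt_l].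
by exists l => //; move: lt_l; rewrite opprB addrCA subrr addr0.
Qed.

End FPureThreshold.

Section Expansions.
Variables (RR : realType) (p : nat).
Hypothesis p_gt0 : (0 < p)%N.

Lemma expansion_partial_sumE (a : nat -> nat) e :
  \sum_(1 <= i < e.+1) (a i)%:R / p%:R ^+ i
    = (\sum_(1 <= i < e.+1) a i * p ^ (e - i))%N%:R / (p ^ e)%:R :> RR.
Proof.
have p_neq0 : p%:R != 0 :> RR by rewrite pnatr_eq0 -lt0n.
rewrite natr_sum mulr_suml; apply: eq_big_nat => i /andP [_ i_le].
have -> : (p ^ e = p ^ (e - i) * p ^ i)%N by rewrite -expnD subnK.
rewrite !natrM !natrX.
by field; rewrite !expf_neq0.
Qed.

Lemma nonterm_expansion_partial_lt alpha (a : nat -> nat) e :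
  nonterm_expansion RR p alpha a ->
  \sum_(1 <= i < e.+1) (a i)%:R / p%:R ^+ i < alpha.
Proof.
move=> [_ [cvg_u nonterm]].
set u := fun n => \sum_(1 <= i < n.+1) (a i)%:R / p%:R ^+ i : RR.
have u_incr : nondecreasing_seq u.
  apply/nondecreasing_seqP => n; rewrite /u [X in _ <= X]big_nat_recr //=.
  by rewrite lerDl divr_ge0 // exprn_ge0.
have [[|j] [ej aj_neq0]] := nonterm e.+1; first by [].
have u_jS : u j < u j.+1.
  rewrite /u [X in _ < X]big_nat_recr //= ltrDl divr_gt0 ?exprn_gt0 ?ltr0n //.
  by rewrite lt0n; apply/eqP.
have lim_u : limn u = alpha by apply: cvg_lim cvg_u.
change (u e < alpha); apply: le_lt_trans (u_incr e j ej) _.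
apply: lt_le_trans u_jS _; rewrite -lim_u.
exact: nondecreasing_cvgn_le u_incr (cvgP _ cvg_u) _.
Qed.

End Expansions.

Theorem mainTheorem4 (RR : realType) (p : nat) (hp : prime p)
  (R : comNzRingType) (hchar : p \in [pchar R]) (hFp : Fpure R p)
  (f : R) (hf0 : f != 0) (hfu : ~ (exists g : R, f * g = 1))
  (e : nat) (he : (0 < e)%N) (t : RR) :
  is_trunc RR p (fpt RR R p f) e t ->
  t * ((p ^ e)%:R / ((p ^ e)%:R - 1)) <= fpt RR R p f.
Proof.
have p_gt1 := prime_gt1 hp; have p_gt0 := prime_gt0 hp.
case=> [[-> ->] | [_ [a [exp_a ->]]]]; first by rewrite mul0r.
rewrite expansion_partial_sumE //; set A := (\sum_(_ <= _ < _) _)%N.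
have [l lt_l hl] : exists2 l, A%:R / (p ^ e)%:R < l & Fpure_pair RR R p f l.
  apply: fpt_gt_Fpure_pair => //; rewrite -expansion_partial_sumE //.
  exact: nonterm_expansion_partial_lt exp_a.
have hA := splits_at_of_Fpure_pair hp hchar he lt_l hl.
have q1_gt0 : 0 < (p ^ e)%:R - 1 :> RR by rewrite subr_gt0 ltr1n -(expn0 p) ltn_exp2l.
have -> : A%:R / (p ^ e)%:R * ((p ^ e)%:R / ((p ^ e)%:R - 1))
          = A%:R / ((p ^ e)%:R - 1) :> RR.
  by field; rewrite lt0r_neq0 //= pnatr_eq0 -lt0n expn_gt0 p_gt0.
by apply: fpt_ge => //; [rewrite divr_ge0 // ltW | exact: Fpure_pair_of_splits_at].
Qed.
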